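(* Fix $\lambda\ge0$ and an integer $\Delta_{\max}\ge1$. Consider the average-cost Markov decision process with state space $S=\{0,1,\dots,\Delta_{\max}\}$, action set $\{0,1\}$, transition probabilities $\mathbb{P}(\Delta'\mid\Delta,a)$ given in the context, and transition cost $C_\lambda(\Delta,a,\Delta')=\Delta'+\lambda a$, i.e., the problem of finding a policy $\pi$ minimizing $\lim_{T\to\infty}\frac1T\mathbb{E}\big[\sum_{t=0}^{T-1}\{\Delta(t)+\lambda a(t)\}\mid s(0)\big]$. Then an optimal policy of this MDP is a threshold policy: there is $\Delta_T$ such that the optimal action is $a=1$ for all states $\Delta\ge\Delta_T$ and $a=0$ for $\Delta<\Delta_T$.
   Context: Let $0<p_s<1$, $0<p_g<1$, $\bar p_s=1-p_s$, $\bar p_g=1-p_g$. The state $\Delta$ is a (truncated) Version Age of Information. The transition probabilities are: for $a=0$: $\mathbb{P}(\Delta+1\mid\Delta,0)=p_g$ and $\mathbb{P}(\Delta\mid\Delta,0)=\bar p_g$ if $\Delta<\Delta_{\max}$, and $\mathbb{P}(\Delta_{\max}\mid\Delta_{\max},0)=1$; for $a=1$: $\mathbb{P}(\Delta+1\mid\Delta,1)=\bar p_s p_g$ and $\mathbb{P}(\Delta\mid\Delta,1)=\bar p_s\bar p_g$ if $\Delta<\Delta_{\max}$, $\mathbb{P}(\Delta_{\max}\mid\Delta_{\max},1)=\bar p_s$, and in all states $\mathbb{P}(1\mid\Delta,1)=p_sp_g$, $\mathbb{P}(0\mid\Delta,1)=p_s\bar p_g$ (probabilities of coinciding target states add). 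*)

From HB Require Import structures.
From mathcomp Require Import all_boot all_order all_algebra.
From mathcomp Require Import all_classical all_reals all_analysis.
Set Implicit Arguments. Unset Strict Implicit. Unset Printing Implicit Defensive.
Import Order.TTheory GRing.Theory Num.Theory.
Local Open Scope ring_scope.

Section VAoIMDP.
Variables (R : realType) (ps pg lam : R) (Dmax : nat).

(* States S = {0,..,Dmax}, encoded as 'I_(Dmax.+1); actions a \in {0,1} encoded
   as bool (true = 1).  Indicator of a nat equality as a real. *)
Definition ind (b : bool) : R := if b then 1 else 0.

(* Transition probability P(s' | s, a), as in the context; probabilities of
   coinciding target states add. *)
Definition trans (s : 'I_Dmax.+1) (a : bool) (s' : 'I_Dmax.+1) : R :=
  if ~~ a then
    (if (s < Dmax)%N
     then pg * ind (val s' == (val s).+1) + (1 - pg) * ind (val s' == val s)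
     else ind (val s' == val s))
  else
    (if (s < Dmax)%N
     then (1 - ps) * pg * ind (val s' == (val s).+1)
          + (1 - ps) * (1 - pg) * ind (val s' == val s)
     else (1 - ps) * ind (val s' == val s))
    + ps * pg * ind (val s' == 1%N) + ps * (1 - pg) * ind (val s' == 0%N).

Definition tcost (s : 'I_Dmax.+1) (a : bool) (s' : 'I_Dmax.+1) : R :=
  (val s')%:R + lam * ind a.

(* A (possibly randomized, time-dependent) Markov policy: pol t s a is the
   probability of choosing action a in state s at time t. *)
Definition markov_policy (pol : nat -> 'I_Dmax.+1 -> bool -> R) : Prop :=
  forall t s, (forall a, 0 <= pol t s a) /\ pol t s false + pol t s true = 1.

Fixpoint state_dist (pol : nat -> 'I_Dmax.+1 -> bool -> R) (s0 : 'I_Dmax.+1)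
    (t : nat) : 'I_Dmax.+1 -> R :=
  match t with
  | 0%N => fun s => ind (s == s0)
  | t'.+1 => fun s' =>
      \sum_(s : 'I_Dmax.+1) state_dist pol s0 t' s *
        (pol t' s false * trans s false s' + pol t' s true * trans s true s')
  end.

Definition exp_cost (pol : nat -> 'I_Dmax.+1 -> bool -> R) (s0 : 'I_Dmax.+1)
    (t : nat) : R :=
  \sum_(s : 'I_Dmax.+1) state_dist pol s0 t s *
    \sum_(a : bool) pol t s a *
      \sum_(s' : 'I_Dmax.+1) trans s a s' * tcost s a s'.

Definition avg_cost (pol : nat -> 'I_Dmax.+1 -> bool -> R) (s0 : 'I_Dmax.+1) : R :=
  limn_sup (fun T : nat => (T%:R)^-1 * \sum_(t < T) exp_cost pol s0 t).

Definition threshold_policy (DT : nat) : nat -> 'I_Dmax.+1 -> bool -> R :=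
  fun _ s a => ind (a == (DT <= val s)%N).

End VAoIMDP.

From HB Require Import structures.
From mathcomp Require Import all_boot all_order all_algebra.
From mathcomp Require Import all_classical all_reals all_analysis.
From mathcomp Require Import ring lra.
Import Order.TTheory GRing.Theory Num.Theory.
Import numFieldNormedType.Exports.
Local Open Scope classical_set_scope.
Local Open Scope ring_scope.

(* We solve the average-cost optimality equation g + h(s) = min_a Q_h(s, a)
   explicitly.  With h(0) = 0, the equation at a state s < Dmax determines
   h(s+1) from h(s) and the unknown average cost g, and the equation at Dmax
   becomes a continuous scalar equation in g, solved by the intermediate value
   theorem.  Action 1 attains the minimum exactly where the expected saving
   ps h(s) of a reset exceeds its price lam; this set of states is upward
   closed, so the greedy policy is a threshold policy.  Telescoping h along
   trajectories shows that g is the average cost of the greedy policy and a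
   lower bound for that of every Markov policy. *)

Section CesaroLimsup.
Variable R : realType.
Implicit Types (u c : R^nat) (l C K : R).

Lemma cvg_divn C : (fun n : nat => C / n%:R) @ \oo --> 0.
Proof.
rewrite -cvg_shiftS.
by have := cvgM (cvg_cst C) (@cvg_harmonic R); rewrite mulr0; apply.
Qed.

Lemma cvg_sub_divn l C : (fun n : nat => l - C / n%:R) @ \oo --> l.
Proof.
by rewrite -[X in _ --> X]subr0; apply: cvgB; [exact: cvg_cst | exact: cvg_divn].
Qed.

Lemma cvg_add_divn l C : (fun n : nat => l + C / n%:R) @ \oo --> l.
Proof.
by rewrite -[X in _ --> X]addr0; apply: cvgD; [exact: cvg_cst | exact: cvg_divn].
Qed.

Lemma limn_sup_eq u l C :
  (forall n, (0 < n)%N -> `|u n - l| <= C / n%:R) -> limn_sup u = l.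
Proof.
move=> ul; apply: (cvg_limn_inf_sup _).2.
apply: (squeeze_cvgr _ (cvg_sub_divn l C) (cvg_add_divn l C)); near=> n.
have /ul : (0 < n)%N by near: n; exists 1%N.
by rewrite ler_norml => /andP[? ?]; apply/andP; split; lra.
Unshelve. all: by end_near. Qed.

Lemma limn_sup_ge u l C K : (forall n, `|u n| <= K) ->
  (forall n, (0 < n)%N -> l - C / n%:R <= u n) -> l <= limn_sup u.
Proof.
move=> uK ul.
have ub : has_ubound (range u).
  by exists K => _ [n _ <-]; exact: le_trans (ler_norm _) (uK n).
have lb : has_lbound (range u).
  by exists (- K) => _ [n _ <-]; rewrite lerNl (le_trans _ (uK n)) // -normrN ler_norm.
have sups_cvg := cvg_sups_inf ub lb.
rewrite /limn_sup (cvg_lim _ sups_cvg) //.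
apply: (ler_cvg_to (cvg_sub_divn l C) sups_cvg); near=> n.
apply: le_trans (ul n _) _; first by near: n; exists 1%N.
by apply: ub_le_sup; [exact: has_ubound_sdrop | exists n => /=].
Unshelve. all: by end_near. Qed.

Lemma cesaro_limn_sup_eq c l C :
  (forall T, `|\sum_(t < T) c t - T%:R * l| <= C) ->
  limn_sup (fun T : nat => T%:R^-1 * \sum_(t < T) c t) = l.
Proof.
move=> cl; apply: (@limn_sup_eq _ _ C) => T T0.
have T0' : T%:R != 0 :> R by rewrite pnatr_eq0 -lt0n.
have -> : T%:R^-1 * \sum_(t < T) c t - l = (\sum_(t < T) c t - T%:R * l) / T%:R.
  by field.
by rewrite normrM normfV normr_nat ler_wpM2r ?invr_ge0.
Qed.

Lemma cesaro_limn_sup_ge c l C K : (forall t, `|c t| <= K) ->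
  (forall T, T%:R * l - C <= \sum_(t < T) c t) ->
  l <= limn_sup (fun T : nat => T%:R^-1 * \sum_(t < T) c t).
Proof.
move=> cK cl; apply: (@limn_sup_ge _ _ C K) => [T|T T0].
  case: T => [|T]; first by rewrite invr0 mul0r normr0 (le_trans _ (cK 0%N)).
  rewrite normrM normfV normr_nat ler_pdivrMl ?ltr0n //.
  apply: le_trans (ler_norm_sum _ _ _) _.
  by rewrite mulr_natl -[X in _ *+ X]card_ord -sumr_const; apply: ler_sum.
have T0' : T%:R != 0 :> R by rewrite pnatr_eq0 -lt0n.
have -> : l - C / T%:R = T%:R^-1 * (T%:R * l - C) by field.
by rewrite ler_wpM2l ?invr_ge0.
Qed.

End CesaroLimsup.

Section AgeTransitions.
Variables (R : realType) (ps pg : R) (Dmax : nat).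
Local Notation S := 'I_Dmax.+1.
Local Notation trans := (@trans R ps pg Dmax).

Lemma sum_ind_eqn (k : nat) (F : S -> R) : (k <= Dmax)%N ->
  \sum_(s : S) ind R (val s == k) * F s = F (inord k).
Proof.
move=> kD; rewrite (bigD1 (inord k)) //= inordK // eqxx mul1r big1 ?addr0 //.
move=> s /eqP sk; case: eqP => [sE|]; last by rewrite mul0r.
by case: sk; apply: val_inj; rewrite /= inordK.
Qed.

Lemma sum_ind_val (s : S) (F : S -> R) :
  \sum_(s' : S) ind R (val s' == val s) * F s' = F s.
Proof. by rewrite sum_ind_eqn ?inord_val // -ltnS ltn_ord. Qed.

Definition idle_mean (G : S -> R) (s : S) : R :=
  if (s < Dmax)%N then pg * G (inord s.+1) + (1 - pg) * G s else G s.

Lemma trans0E G s : \sum_s' trans s false s' * G s' = idle_mean G s.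
Proof.
rewrite /trans /idle_mean /=; case: ifP => sD; last by rewrite sum_ind_val.
under eq_bigr do rewrite mulrDl -!mulrA.
by rewrite big_split /= -!mulr_sumr sum_ind_val sum_ind_eqn.
Qed.

Lemma trans1_mix s s' : (0 < Dmax)%N ->
  trans s true s' = (1 - ps) * trans s false s' + ps * trans ord0 false s'.
Proof. by move=> D0; rewrite /trans /= D0; case: ifP => _; ring. Qed.

Lemma trans1E G s : (0 < Dmax)%N ->
  \sum_s' trans s true s' * G s' = (1 - ps) * idle_mean G s + ps * idle_mean G ord0.
Proof.
move=> D0; under eq_bigr do rewrite trans1_mix // mulrDl -!mulrA.
by rewrite big_split /= -!mulr_sumr !trans0E.
Qed.

Lemma trans_sum1 s a : (0 < Dmax)%N -> \sum_s' trans s a s' = 1.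
Proof.
move=> D0; have idle1 s' : idle_mean (fun=> 1) s' = 1.
  by rewrite /idle_mean; case: ifP => _ //; ring.
under eq_bigr do rewrite -[trans _ _ _]mulr1.
by case: a; rewrite ?trans1E ?trans0E ?idle1 //; ring.
Qed.

Lemma trans_ge0 s a s' : 0 <= ps <= 1 -> 0 <= pg <= 1 -> 0 <= trans s a s'.
Proof.
move=> /andP[ps0 ps1] /andP[pg0 pg1].
have ind0 b : 0 <= ind R b by case: b.
have [qs0 qg0] : 0 <= 1 - ps /\ 0 <= 1 - pg by split; rewrite subr_ge0.
by rewrite /trans; case: a; case: ifP => _ /=;
  rewrite ?addr_ge0 ?mulr_ge0.
Qed.

End AgeTransitions.

Arguments idle_mean {R} pg {Dmax} G s.

Section WeightedMean.
Variables (R : realType) (I : finType) (w : I -> R).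
Hypotheses (w_ge0 : forall i, 0 <= w i) (w_sum1 : \sum_i w i = 1).

Lemma wmean_ge (X : I -> R) c : (forall i, c <= X i) -> c <= \sum_i w i * X i.
Proof.
move=> cX; rewrite -[c]mul1r -w_sum1 mulr_suml.
by apply: ler_sum => i _; rewrite ler_wpM2l.
Qed.

Lemma norm_wmean_le (X : I -> R) K : (forall i, `|X i| <= K) ->
  `|\sum_i w i * X i| <= K.
Proof.
move=> XK; apply: le_trans (ler_norm_sum _ _ _) _.
rewrite -[K]mul1r -w_sum1 mulr_suml; apply: ler_sum => i _.
by rewrite normrM ger0_norm ?ler_wpM2l.
Qed.

Lemma wmeanDl (X : I -> R) c : \sum_i w i * (c + X i) = c + \sum_i w i * X i.
Proof.
by under eq_bigr do rewrite mulrDr; rewrite big_split /= -mulr_suml w_sum1 mul1r.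
Qed.

End WeightedMean.

Section AverageCostVerification.
Context {R : realType} {ps pg lam : R} {Dmax : nat}.
Local Notation S := 'I_Dmax.+1.
Local Notation trans := (@trans R ps pg Dmax).
Hypotheses (trans_nonneg : forall s a s', 0 <= trans s a s')
  (trans_stochastic : forall s a, \sum_s' trans s a s' = 1).

Definition qvalue (h : S -> R) (s : S) (a : bool) : R :=
  \sum_s' trans s a s' * (tcost lam s a s' + h s').

Lemma norm_tcost_le (s : S) (a : bool) (s' : S) :
  `|tcost lam s a s'| <= Dmax%:R + `|lam|.
Proof.
rewrite /tcost (le_trans (ler_normD _ _)) // normr_nat lerD //.
  by rewrite ler_nat -ltnS ltn_ord.
by rewrite normrM /ind; case: a; rewrite ?normr1 ?normr0 ?mulr1 ?mulr0.
Qed.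

Section Policy.
Context {pol : nat -> S -> bool -> R} {s0 : S}.
Hypothesis pol_markov : markov_policy pol.
Local Notation dist := (state_dist ps pg pol s0).
Local Notation mean t f := (\sum_s dist t s * f s).

Lemma pol_ge0 t s a : 0 <= pol t s a.
Proof. by case: (pol_markov t s). Qed.

Lemma pol_sum1 t s : \sum_a pol t s a = 1.
Proof. by rewrite big_bool /= addrC; case: (pol_markov t s). Qed.

Lemma state_dist0E f : mean 0%N f = f s0.
Proof.
rewrite (bigD1 s0) //= eqxx mul1r big1 ?addr0 // => s /negPf ->.
by rewrite mul0r.
Qed.

Lemma state_distSE t f : mean t.+1 f =
  \sum_s dist t s * \sum_a pol t s a * \sum_s' trans s a s' * f s'.
Proof.
rewrite /=; under eq_bigr do rewrite mulr_suml.
rewrite exchange_big; apply: eq_bigr => s _ /=.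
under eq_bigr do rewrite -mulrA.
rewrite big_bool /= -mulr_sumr; congr (_ * _).
by rewrite !mulr_sumr -big_split /=; apply: eq_bigr => s' _; ring.
Qed.

Lemma state_dist_ge0 t s : 0 <= dist t s.
Proof.
elim: t s => [|t IH] s /=; first by rewrite /ind; case: eqP.
by apply: sumr_ge0 => s' _; rewrite mulr_ge0 ?addr_ge0 ?mulr_ge0 ?pol_ge0.
Qed.

Lemma state_dist_sum1 t : \sum_s dist t s = 1.
Proof.
elim: t => [|t IH].
  by rewrite -[RHS](state_dist0E (fun=> 1)); apply: eq_bigr => s _; rewrite mulr1.
transitivity (mean t.+1 (fun=> 1)); first by under [RHS]eq_bigr do rewrite mulr1.
rewrite state_distSE -[RHS]IH; apply: eq_bigr => s _; rewrite -[RHS]mulr1.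
congr (_ * _); rewrite -[RHS](pol_sum1 t s); apply: eq_bigr => a _ /=.
by under eq_bigr do rewrite mulr1; rewrite trans_stochastic mulr1.
Qed.

Lemma norm_exp_cost_le t : `|exp_cost ps pg lam pol s0 t| <= Dmax%:R + `|lam|.
Proof.
apply: norm_wmean_le => [s||s]; rewrite ?state_dist_ge0 ?state_dist_sum1 //.
apply: norm_wmean_le => [a||a]; rewrite ?pol_ge0 ?pol_sum1 //.
apply: norm_wmean_le => [s'||s']; rewrite ?trans_nonneg ?trans_stochastic //.
exact: norm_tcost_le.
Qed.

Context {g : R} {h : S -> R}.

Definition excess t : R :=
  \sum_s dist t s * (\sum_a pol t s a * qvalue h s a - (g + h s)).

Lemma exp_cost_excessE t :
  exp_cost ps pg lam pol s0 t + mean t.+1 h = g + mean t h + excess t.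
Proof.
have -> : excess t = \sum_s dist t s * \sum_a pol t s a * qvalue h s a - (g + mean t h).
  rewrite /excess; under eq_bigr do rewrite mulrBr.
  by rewrite sumrB wmeanDl ?state_dist_ge0 ?state_dist_sum1.
rewrite [RHS]addrC subrK state_distSE /exp_cost -big_split /=.
apply: eq_bigr => s _; rewrite -mulrDr -big_split /=; congr (_ * _).
apply: eq_bigr => a _; rewrite -mulrDr -big_split /=; congr (_ * _).
by rewrite /qvalue /tcost; apply: eq_bigr => s' _; ring.
Qed.

Lemma sum_exp_costE T : \sum_(t < T) exp_cost ps pg lam pol s0 t + mean T h =
  T%:R * g + h s0 + \sum_(t < T) excess t.
Proof.
elim: T => [|T IH]; first by rewrite !big_ord0 state_dist0E mul0r !add0r addr0.
(* Generalizing the state means keeps [big_ord_recr] off their sums. *)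
have := exp_cost_excessE T; move: (mean T.+1 h) (mean T h) IH => mT1 mT IH.
rewrite !big_ord_recr /= -natr1; lra.
Qed.

Lemma norm_mean_le t : `|mean t h| <= \sum_s `|h s|.
Proof.
apply: norm_wmean_le => [s||s]; rewrite ?state_dist_ge0 ?state_dist_sum1 //.
by rewrite (bigD1 s) //= lerDl sumr_ge0.
Qed.

Lemma avg_cost_ge : (forall s a, g + h s <= qvalue h s a) ->
  g <= avg_cost ps pg lam pol s0.
Proof.
move=> h_opt.
apply: (@cesaro_limn_sup_ge _ _ _ (2 * \sum_s `|h s|) (Dmax%:R + `|lam|)).
  exact: norm_exp_cost_le.
move=> T; have excess_ge0 : 0 <= \sum_(t < T) excess t.
  apply: sumr_ge0 => t _; apply: sumr_ge0 => s _.
  rewrite mulr_ge0 ?state_dist_ge0 // subr_ge0.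
  by apply: wmean_ge => [a||a]; rewrite ?pol_ge0 ?pol_sum1 ?h_opt.
have := sum_exp_costE T; have := norm_mean_le T; have := norm_mean_le 0%N.
rewrite state_dist0E !ler_norml; lra.
Qed.

Lemma avg_cost_eq : (forall t s, \sum_a pol t s a * qvalue h s a = g + h s) ->
  avg_cost ps pg lam pol s0 = g.
Proof.
move=> pol_opt; apply: (@cesaro_limn_sup_eq _ _ _ (2 * \sum_s `|h s|)) => T.
have excess0 : \sum_(t < T) excess t = 0.
  rewrite big1 // => t _; rewrite /excess big1 // => s _.
  by rewrite pol_opt subrr mulr0.
have := sum_exp_costE T; have := norm_mean_le T; have := norm_mean_le 0%N.
rewrite state_dist0E excess0 !ler_norml; lra.
Qed.

End Policy.
End AverageCostVerification.

Arguments qvalue {R} ps pg lam {Dmax} h s a.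

Lemma upward_closed_threshold (P : pred nat) n :
  (forall i, (i < n)%N -> P i -> P i.+1) ->
  exists DT, forall k, (k <= n)%N -> (DT <= k)%N = P k.
Proof.
move=> P_up; exists (find P (iota 0 n.+1)) => k kn.
set DT := find P (iota 0 n.+1); apply/idP/idP => [DTk|Pk].
  have DTn : (DT < n.+1)%N by rewrite ltnS (leq_trans DTk).
  have P_DT : P DT.
    have hasP : has P (iota 0 n.+1) by rewrite has_find size_iota.
    by have := nth_find 0%N hasP; rewrite nth_iota.
  have P_from j : (DT + j <= n)%N -> P (DT + j)%N.
    elim: j => [|j IH] Hj; first by rewrite addn0.
    rewrite addnS; apply: P_up; first by rewrite -addnS.
    by apply: IH; apply: ltnW; rewrite -addnS.
  by rewrite -(subnKC DTk); apply: P_from; rewrite subnKC.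
rewrite leqNgt; apply/negP => kDT.
by have := before_find 0%N kDT; rewrite nth_iota ?add0n ?Pk.
Qed.

Section AgeBias.
Variables (R : realType) (ps pg lam : R) (Dmax : nat).
Hypotheses (ps_gt0 : 0 < ps) (ps_lt1 : ps < 1) (pg_gt0 : 0 < pg) (pg_lt1 : pg < 1)
  (lam_ge0 : 0 <= lam).

Definition reset_gain (x : R) : R := Num.max (ps * x - lam) 0.

(* h(k+1) is solved from the optimality equation at state k, given h(k) and the
   candidate average cost g; residual g is what is left of the equation at Dmax. *)
Fixpoint bias (g : R) (k : nat) : R :=
  if k is k'.+1 then
    bias g k' + (reset_gain (bias g k') / (1 - ps) + g - k'%:R - pg) / pg
  else 0.

Definition residual (g : R) : R :=
  g - Dmax%:R + reset_gain (bias g Dmax) / (1 - ps).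

Lemma biasS g k :
  bias g k.+1 = bias g k + (reset_gain (bias g k) / (1 - ps) + g - k%:R - pg) / pg.
Proof. by []. Qed.

Lemma reset_gain_ge0 x : 0 <= reset_gain x.
Proof. by rewrite /reset_gain le_max lexx orbT. Qed.

Lemma reset_gain_ge x : ps * x - lam <= reset_gain x.
Proof. by rewrite /reset_gain le_max lexx. Qed.

Lemma reset_gain_eq0 x : ps * x <= lam -> reset_gain x = 0.
Proof. by move=> h; rewrite /reset_gain max_r // subr_le0. Qed.

Lemma reset_gain_pos x : lam <= ps * x -> reset_gain x = ps * x - lam.
Proof. by move=> h; rewrite /reset_gain max_l // subr_ge0. Qed.

Lemma continuous_reset_gain : continuous reset_gain.
Proof.
move=> x; apply: (@continuous_max _ _ (fun y => ps * y - lam) (fun=> 0)).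
  by apply: cvgB; [apply: cvgM; [exact: cvg_cst | exact: cvg_id] | exact: cvg_cst].
exact: cvg_cst.
Qed.

Lemma continuous_bias k : continuous (bias ^~ k).
Proof.
elim: k => [|k IH] x /=; first exact: cvg_cst.
apply: cvgD; first exact: IH.
apply: cvgM; last exact: cvg_cst.
apply: cvgB; last exact: cvg_cst.
apply: cvgB; last exact: cvg_cst.
apply: cvgD; last exact: cvg_id.
apply: cvgM; last exact: cvg_cst.
exact: cvg_comp (IH x) (continuous_reset_gain _).
Qed.

Lemma continuous_residual : continuous residual.
Proof.
move=> x; apply: cvgD; first by apply: cvgB; [exact: cvg_id | exact: cvg_cst].
apply: cvgM; last exact: cvg_cst.
exact: cvg_comp (continuous_bias Dmax x) (continuous_reset_gain _).
Qed.

Lemma residual_root : exists g, residual g = 0.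
Proof.
have res0 : residual 0 <= 0.
  have bias0_le0 k : bias 0 k <= 0.
    elim: k => [|k IH] //; rewrite biasS reset_gain_eq0; last first.
      by apply: le_trans lam_ge0; rewrite pmulr_rle0.
    have : (0 / (1 - ps) + 0 - k%:R - pg) / pg <= 0.
      by rewrite ler_pdivrMr // !mul0r; have := ler0n R k; have := pg_gt0; lra.
    lra.
  rewrite /residual reset_gain_eq0; last by rewrite (le_trans _ lam_ge0) ?pmulr_rle0.
  by rewrite mul0r addr0 sub0r oppr_le0.
have resD : 0 <= residual Dmax%:R.
  by rewrite /residual subrr add0r divr_ge0 ?reset_gain_ge0 // subr_ge0 ltW.
have res_range : Num.min (residual 0) (residual Dmax%:R) <= 0
    <= Num.max (residual 0) (residual Dmax%:R).
  by rewrite ge_min res0 /= le_max resD orbT.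
have [g _ gE] := IVT (ler0n _ _) (continuous_subspaceT continuous_residual) res_range.
by exists g.
Qed.

Lemma bias_decreasing g k : ps * bias g k <= lam -> g < k%:R + pg ->
  bias g k.+1 < bias g k.
Proof.
move=> no_gain gk; rewrite biasS reset_gain_eq0 // mul0r add0r gtrDl.
by rewrite pmulr_llt0 ?invr_gt0 //; lra.
Qed.

Lemma bias_no_gain_from g k n : ps * bias g k <= lam -> g < k%:R + pg ->
  ps * bias g (k + n) <= lam.
Proof.
move=> no_gain gk; elim: n => [|n IH]; first by rewrite addn0.
have gkn : g < (k + n)%:R + pg by rewrite natrD; have := ler0n R n; lra.
rewrite addnS (le_trans _ IH) // ltW // ltr_pM2l //.
exact: bias_decreasing.
Qed.

Section Solution.
Variable g : R.
Hypothesis residual_g : residual g = 0.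
Local Notation S := 'I_Dmax.+1.
Local Notation Q := (qvalue ps pg lam (fun s : S => bias g s)).

Lemma reset_gain_upward k : (k < Dmax)%N -> lam < ps * bias g k ->
  lam < ps * bias g k.+1.
Proof.
move=> kD gain_k; rewrite ltNge; apply/negP => no_gain.
have gk : g < k%:R + pg.
  have : bias g k.+1 < bias g k by rewrite -(ltr_pM2l ps_gt0); lra.
  rewrite biasS gtrDl pmulr_llt0 ?invr_gt0 //.
  have : 0 <= reset_gain (bias g k) / (1 - ps).
    by rewrite divr_ge0 ?reset_gain_ge0 // subr_ge0 ltW.
  lra.
have gk1 : g < k.+1%:R + pg by rewrite -natr1; lra.
have := @bias_no_gain_from g k.+1 (Dmax - k.+1)%N no_gain gk1.
rewrite subnKC // => /reset_gain_eq0 last_no_gain.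
have gD : g = Dmax%:R.
  by apply/eqP; rewrite -subr_eq0 -residual_g /residual last_no_gain mul0r addr0.
have : k.+1%:R <= Dmax%:R :> R by rewrite ler_nat.
by rewrite -natr1; have := pg_lt1; lra.
Qed.

Lemma idle_mean_value (s : S) :
  idle_mean pg (fun s' : S => (val s')%:R + bias g s') s =
  g + bias g s + reset_gain (bias g s) / (1 - ps).
Proof.
rewrite /idle_mean; case: ifP => sD.
  rewrite /= inordK // biasS -natr1; move: (reset_gain _ / _) => M.
  by field; rewrite lt0r_neq0.
have sD' : (s : nat) = Dmax by apply/eqP; rewrite eqn_leq -ltnS ltn_ord leqNgt sD.
by move: residual_g; rewrite /residual /= sD'; lra.
Qed.

Lemma qvalue0E s : Q s false = g + bias g s + reset_gain (bias g s) / (1 - ps).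
Proof.
rewrite /qvalue /tcost /=; under eq_bigr do rewrite mulr0 addr0.
by rewrite trans0E idle_mean_value.
Qed.

Lemma qvalue1E s : (0 < Dmax)%N ->
  Q s true = g + bias g s + (lam - ps * bias g s + reset_gain (bias g s)).
Proof.
move=> D0; rewrite /qvalue /tcost /=.
under eq_bigr do rewrite mulr1 addrAC mulrDr.
rewrite big_split /= -mulr_suml trans_sum1 // mul1r trans1E // !idle_mean_value /=.
rewrite [reset_gain 0]reset_gain_eq0 ?mulr0 // mul0r !addr0; move: (reset_gain _) => M.
by field; rewrite subr_eq0 eq_sym lt_eqF.
Qed.

Lemma qvalue_ge (s : S) a : (0 < Dmax)%N -> g + bias g s <= Q s a.
Proof.
move=> D0; case: a; rewrite ?qvalue1E ?qvalue0E // lerDl.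
  by have := reset_gain_ge (bias g s); lra.
by rewrite divr_ge0 ?reset_gain_ge0 // subr_ge0 ltW.
Qed.

Lemma qvalue_threshold (s : S) : (0 < Dmax)%N ->
  Q s (lam < ps * bias g s) = g + bias g s.
Proof.
move=> D0; case: ltP => gain.
  by rewrite qvalue1E // reset_gain_pos ?ltW //; ring.
by rewrite qvalue0E reset_gain_eq0 // mul0r addr0.
Qed.

End Solution.

Lemma threshold_acoe_solution : (0 < Dmax)%N ->
  exists g (h : 'I_Dmax.+1 -> R) DT,
    (forall s a, g + h s <= qvalue ps pg lam h s a) /\
    (forall s, qvalue ps pg lam h s (DT <= s)%N = g + h s).
Proof.
move=> D0; have [g residual_g] := residual_root.
have [DT DT_gain] := upward_closed_threshold (fun k => lam < ps * bias g k)
  Dmax (reset_gain_upward g residual_g).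
exists g, (fun s => bias g s), DT; split => [s a|s]; first exact: qvalue_ge.
by rewrite DT_gain ?qvalue_threshold // -ltnS ltn_ord.
Qed.

End AgeBias.

Lemma sum_threshold_policy {R : realType} {Dmax : nat} (DT t : nat)
    (s : 'I_Dmax.+1) (F : bool -> R) :
  \sum_a threshold_policy R DT t s a * F a = F (DT <= s)%N.
Proof.
rewrite big_bool /threshold_policy /ind.
by case: (DT <= s)%N; rewrite /= mul0r mul1r ?addr0 ?add0r.
Qed.

Lemma threshold_policy_markov {R : realType} {Dmax : nat} (DT : nat) :
  markov_policy (@threshold_policy R Dmax DT).
Proof.
move=> t s; split=> [a|]; first by rewrite /threshold_policy /ind; case: eqP.
by rewrite /threshold_policy /ind; case: (DT <= s)%N; rewrite /= ?addr0 ?add0r.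
Qed.

Theorem proposition5 (R : realType) (ps pg lam : R) (Dmax : nat)
  (hps0 : 0 < ps) (hps1 : ps < 1) (hpg0 : 0 < pg) (hpg1 : pg < 1)
  (hlam : 0 <= lam) (hD : (1 <= Dmax)%N) :
  exists DT : nat,
    forall (pol : nat -> 'I_Dmax.+1 -> bool -> R) (s0 : 'I_Dmax.+1),
      @markov_policy R Dmax pol ->
      @avg_cost R ps pg lam Dmax (@threshold_policy R Dmax DT) s0
        <= @avg_cost R ps pg lam Dmax pol s0.
Proof.
have [g [h [DT [h_opt h_thr]]]] :=
  @threshold_acoe_solution R ps pg lam Dmax hps0 hps1 hpg0 hpg1 hlam hD.
have trans_nonneg (s : 'I_Dmax.+1) a s' : 0 <= trans ps pg s a s'.
  by apply: trans_ge0; rewrite !ltW.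
have trans_stochastic (s : 'I_Dmax.+1) a : \sum_s' trans ps pg s a s' = 1.
  by apply: trans_sum1.
have threshold_opt t s :
    \sum_a threshold_policy R DT t s a * qvalue ps pg lam h s a = g + h s.
  by rewrite sum_threshold_policy h_thr.
exists DT => pol s0 pol_markov.
rewrite (avg_cost_eq trans_nonneg trans_stochastic (threshold_policy_markov DT)
  threshold_opt).
exact: avg_cost_ge.
Qed.
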